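(* Let $X$ be an infinite-dimensional complex Banach space and let $\phi:\mathcal{B}(X)\to\mathcal{B}(X)$ be a surjective map such that $K(\phi(T)\phi(S)+\phi(S)\phi(T))=K(TS+ST)$ for all $T,S\in\mathcal{B}(X)$. Then for every $F\in\mathcal{B}(X)$, $\phi(F)$ has rank one if and only if $F$ has rank one.
   Context: $\mathcal{B}(X)$ denotes the algebra of all bounded linear operators on $X$. For $T\in\mathcal{B}(X)$, the analytic core $K(T)$ is the set of all $x\in X$ for which there exist $\delta>0$ and a sequence $(x_n)_{n\ge 0}\subset X$ with $x_0=x$, $Tx_{n+1}=x_n$ and $\|x_n\|\le \delta^n\|x\|$ for all $n\ge 0$. *)

From mathcomp Require Import all_boot all_algebra all_classical all_reals all_analysis.
From mathcomp Require Import complex.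
Import GRing.Theory Num.Theory.
Set Implicit Arguments. Unset Strict Implicit. Unset Printing Implicit Defensive.
Local Open Scope ring_scope.
Local Open Scope classical_set_scope.

(* Operators are
   represented as functions X -> X together with the predicate [bounded_op]. *)

Section Ops.
Variables (R : realType) (X : normedModType R[i]).

Definition bounded_op (T : X -> X) : Prop :=
  (forall (a : R[i]) (x y : X), T (a *: x + y) = a *: T x + T y) /\
  (exists M : R[i], forall x : X, `|T x| <= M * `|x|).

Definition infinite_dimensional : Prop :=
  forall s : seq X, exists x : X,
    forall c : 'I_(size s) -> R[i], x != \sum_(i < size s) c i *: s`_i.

Definition analytic_core (T : X -> X) : set X :=
  [set x | exists (delta : R[i]) (xs : nat -> X),
     0 < delta /\ xs 0%N = x /\
     (forall n, T (xs n.+1) = xs n) /\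
     (forall n, `|xs n| <= delta ^+ n * `|x|)].

Definition rank_one (T : X -> X) : Prop :=
  (exists x, T x != 0) /\ exists y : X, forall x, exists c : R[i], T x = c *: y.

Definition jprod (T S : X -> X) : X -> X := fun x => T (S x) + S (T x).

End Ops.

(* [F] has rank one iff some [K(TF + FT)] is nonzero while no [K(TF + FT)] contains
   three independent vectors; both conditions only involve analytic cores of Jordan
   products, which [phi] preserves.  Eigenvectors for nonzero eigenvalues lie in the
   analytic core.  If [F] has rank one with range [span y], then [K(TF + FT)] lies in
   the range [span (y, T y)]; an eigenvector is obtained with [T = 1] or [T = g(.) x].
   If [F] has rank at least two, either some [w, F w, F^2 w] are independent or, by a
   Kaplansky-type argument, [F^2 = a F + b]; in every case an operator [T] built from
   Hahn-Banach functionals dual to a finite independent family gives [TF + FT] three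
   independent eigenvectors with nonzero eigenvalues. *)

From mathcomp Require Import all_boot all_algebra all_classical all_reals all_analysis.
From mathcomp Require Import complex.
From mathcomp Require Import lra ring.
Import GRing.Theory Num.Theory.
Import order.Order.TTheory.
Set Implicit Arguments. Unset Strict Implicit. Unset Printing Implicit Defensive.
Local Open Scope classical_set_scope.
Local Open Scope ring_scope.

Section LinearMaps.
Variables (R : realType) (X : normedModType R[i]).
Local Notation C := R[i].

Definition linear_fun (V : lmodType C) (f : X -> V) :=
  forall (a : C) (x y : X), f (a *: x + y) = a *: f x + f y.

Definition bounded_functional (f : X -> C) :=
  linear_fun f /\ exists M : C, forall x, `|f x| <= M * `|x|.

Section LinearFunTheory.
Variables (V : lmodType C) (f : X -> V).
Hypothesis f_lin : linear_fun f.

Lemma linear_fun0 : f 0 = 0.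
Proof.
have h := f_lin 1 0 0; rewrite scaler0 addr0 scale1r in h.
by apply: (addrI (f 0)); rewrite addr0 -h.
Qed.

Lemma linear_funD x y : f (x + y) = f x + f y.
Proof. by have := f_lin 1 x y; rewrite !scale1r. Qed.

Lemma linear_funZ a x : f (a *: x) = a *: f x.
Proof. by have := f_lin a x 0; rewrite addr0 linear_fun0 addr0. Qed.

Lemma linear_funB x y : f (x - y) = f x - f y.
Proof. by rewrite linear_funD -[- y]scaleN1r linear_funZ scaleN1r. Qed.

Lemma linear_fun_sum n (c : nat -> C) (e : nat -> X) :
  f (\sum_(i < n) c i *: e i) = \sum_(i < n) c i *: f (e i).
Proof.
elim: n => [|n IH]; first by rewrite !big_ord0 linear_fun0.
by rewrite !big_ord_recr /= linear_funD IH linear_funZ.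
Qed.

End LinearFunTheory.

Lemma bounded_op_linear (T : X -> X) : bounded_op T -> linear_fun T.
Proof. by case. Qed.

Lemma bounded_functionalD f g :
  bounded_functional f -> bounded_functional g ->
  bounded_functional (fun x => f x + g x).
Proof.
move=> [lf [M1 hM1]] [lg [M2 hM2]]; split.
  by move=> a x y; rewrite lf lg /= scalerDr addrACA.
exists (M1 + M2) => x; rewrite mulrDl; apply: le_trans (ler_normD _ _) _.
exact: lerD.
Qed.

Lemma bounded_functionalZ (k : C) f :
  bounded_functional f -> bounded_functional (fun x => k * f x).
Proof.
move=> [lf [M hM]]; split; first by move=> a x y; rewrite lf mulrDr mulrCA.
exists (`|k| * M) => x; rewrite normrM -mulrA.
by apply: ler_wpM2l; [exact: normr_ge0 | exact: hM].
Qed.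

Lemma bounded_functionalB f g :
  bounded_functional f -> bounded_functional g ->
  bounded_functional (fun x => f x - g x).
Proof.
move=> bf /(bounded_functionalZ (-1)) bg.
by under eq_fun do rewrite -mulN1r; exact: bounded_functionalD.
Qed.

Lemma bounded_functional_sum n (F : nat -> X -> C) :
  (forall i, bounded_functional (F i)) ->
  bounded_functional (fun x => \sum_(i < n) F i x).
Proof.
move=> bF; elim: n => [|n IH].
  under eq_fun do rewrite big_ord0.
  split; first by move=> a x y; rewrite addr0 scaler0.
  by exists 0 => x; rewrite normr0 mul0r.
under eq_fun do rewrite big_ord_recr.
exact: bounded_functionalD.
Qed.

Lemma bounded_opD (T S : X -> X) :
  bounded_op T -> bounded_op S -> bounded_op (fun x => T x + S x).
Proof.
move=> [lT [M1 hM1]] [lS [M2 hM2]]; split.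
  by move=> a x y; rewrite lT lS scalerDr addrACA.
exists (M1 + M2) => x; rewrite mulrDl; apply: le_trans (ler_normD _ _) _.
exact: lerD.
Qed.

Lemma bounded_op_rank1 (f : X -> C) (v : X) :
  bounded_functional f -> bounded_op (fun x => f x *: v).
Proof.
move=> [lf [M hM]]; split; first by move=> a x y; rewrite lf scalerDl scalerA.
exists (M * `|v|) => x; rewrite normrZ mulrAC.
by apply: ler_wpM2r; [exact: normr_ge0 | exact: hM].
Qed.

Lemma bounded_opZ (k : C) (T : X -> X) :
  bounded_op T -> bounded_op (fun x => k *: T x).
Proof.
move=> [lT [M hM]]; split; first by move=> a x y; rewrite lT scalerDr !scalerA mulrC.
exists (`|k| * M) => x; rewrite normrZ -mulrA.
by apply: ler_wpM2l; [exact: normr_ge0 | exact: hM].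
Qed.

Lemma bounded_op_id : bounded_op (fun x : X => x).
Proof. by split => //; exists 1 => x; rewrite mul1r. Qed.

End LinearMaps.

Section HahnBanach.
Local Open Scope complex_scope.
Variables (R : realType) (X : normedModType R[i]).
Local Notation C := R[i].

(* X as a real vector space; the norm of X is complex-valued but real, and
   [rnorm x] is that real number. *)
Definition rscale (t : R) (x : X) : X := t%:C *: x.
Definition rnorm (x : X) : R := complex.Re `|x|.

Lemma normc_real (t : R) : `|t%:C| = `|t|%:C :> C.
Proof. by rewrite normc_def /= expr0n /= addr0 sqrtr_sqr. Qed.

Lemma normc_i : `|'i : C| = 1.
Proof. by rewrite normc_def /= expr0n expr1n add0r sqrtr1. Qed.

Lemma rnormE x : `|x| = (rnorm x)%:C.
Proof. by rewrite /rnorm RRe_real // ger0_real. Qed.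

Lemma rnorm_ge0 x : 0 <= rnorm x.
Proof. by rewrite -ler0c -rnormE. Qed.

Lemma rnormD x y : rnorm (x + y) <= rnorm x + rnorm y.
Proof. by rewrite -lecR rmorphD /= -!rnormE ler_normD. Qed.

Lemma rnormZ t x : rnorm (rscale t x) = `|t| * rnorm x.
Proof. by apply: complexI; rewrite rmorphM /= -!rnormE -normc_real normrZ. Qed.

Lemma rnormN x : rnorm (- x) = rnorm x.
Proof. by rewrite /rnorm normrN. Qed.

Lemma rnorm_i x : rnorm ('i *: x) = rnorm x.
Proof. by rewrite /rnorm normrZ normc_i mul1r. Qed.

Lemma rscale1 x : rscale 1 x = x.
Proof. by rewrite /rscale rmorph1 scale1r. Qed.

Lemma rscale0 x : rscale 0 x = 0.
Proof. by rewrite /rscale rmorph0 scale0r. Qed.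

Lemma rscaleA s t x : rscale s (rscale t x) = rscale (s * t) x.
Proof. by rewrite /rscale scalerA rmorphM. Qed.

Lemma rscaleDl s t x : rscale (s + t) x = rscale s x + rscale t x.
Proof. by rewrite /rscale rmorphD scalerDl. Qed.

Lemma rscaleDr s x y : rscale s (x + y) = rscale s x + rscale s y.
Proof. by rewrite /rscale scalerDr. Qed.

Lemma rscaleN s x : rscale (- s) x = - rscale s x.
Proof. by rewrite /rscale rmorphN scaleNr. Qed.

Lemma scale_ReIm (a : C) (x : X) :
  a *: x = rscale (complex.Re a) x + rscale (complex.Im a) ('i *: x).
Proof.
rewrite /rscale scalerA -scalerDl; congr (_ *: x).
by rewrite {1}[a]complexE [(complex.Im a)%:C * _]mulrC.
Qed.

Variable y : X.
Hypothesis y_neq0 : y != 0.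

(* Graphs of real-linear functionals on real subspaces of X, dominated by
   [rnorm] and norming [y]; these are the objects Zorn's lemma is applied to. *)
Definition hb_graph (G : set (X * R)) :=
  [/\ (forall x a b, G (x, a) -> G (x, b) -> a = b),
      G (0, 0),
      (forall x a x' a' t, G (x, a) -> G (x', a') -> G (rscale t x + x', t * a + a')),
      (forall x a, G (x, a) -> a <= rnorm x) &
      G (y, rnorm y)].

Definition line_graph : set (X * R) :=
  fun q => exists t, q = (rscale t y, t * rnorm y).

Lemma hb_graph_line : hb_graph line_graph.
Proof.
split.
- move=> x a b [t [-> ->]] [t' [e ->]]; move: e => /eqP.
  rewrite -subr_eq0 /rscale -scalerBl scaler_eq0 (negbTE y_neq0) orbF -rmorphB.
  by rewrite /= eq_complex /= eqxx andbT subr_eq0 => /eqP ->.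
- by exists 0; rewrite rscale0 mul0r.
- move=> x a x' a' t [s [-> ->]] [s' [-> ->]]; exists (t * s + s').
  by rewrite rscaleA rscaleDl mulrDl mulrA.
- move=> x a [t [-> ->]]; rewrite rnormZ.
  by apply: ler_wpM2r; [exact: rnorm_ge0 | exact: ler_norm].
- by exists 1; rewrite rscale1 mul1r.
Qed.

Section HBGraphTheory.
Variable G : set (X * R).
Hypothesis hG : hb_graph G.

Lemma hb_graph_fun x a b : G (x, a) -> G (x, b) -> a = b.
Proof. by case: hG => hf _ _ _ _; exact: hf. Qed.

Lemma hb_graph0 : G (0, 0).
Proof. by case: hG. Qed.

Lemma hb_graph_comb x a x' a' t :
  G (x, a) -> G (x', a') -> G (rscale t x + x', t * a + a').
Proof. by case: hG => _ _ hc _ _; exact: hc. Qed.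

Lemma hb_graph_le x a : G (x, a) -> a <= rnorm x.
Proof. by case: hG => _ _ _ hd _; exact: hd. Qed.

Lemma hb_graph_y : G (y, rnorm y).
Proof. by case: hG. Qed.

Lemma hb_graphZ u a s : G (u, a) -> G (rscale s u, s * a).
Proof. by move=> hu; have := hb_graph_comb s hu hb_graph0; rewrite !addr0. Qed.

Lemma hb_graphD u a u' a' : G (u, a) -> G (u', a') -> G (u + u', a + a').
Proof. by move=> hu hu'; have := hb_graph_comb 1 hu hu'; rewrite rscale1 mul1r. Qed.

End HBGraphTheory.

Definition graph_ext (G : set (X * R)) x0 c : set (X * R) :=
  fun q => exists t u a, G (u, a) /\ q = (rscale t x0 + u, t * c + a).

Section GraphExtension.
Variables (G : set (X * R)) (x0 : X) (c : R).
Hypothesis hG : hb_graph G.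
Hypothesis c_lb : forall u a, G (u, a) -> a - rnorm (u - x0) <= c.
Hypothesis c_ub : forall v b, G (v, b) -> c <= rnorm (v + x0) - b.

Lemma graph_ext_le t u a : G (u, a) -> t * c + a <= rnorm (rscale t x0 + u).
Proof.
move=> hu; case: (ltgtP t 0) => [tneg|tpos|->]; last first.
- by rewrite rscale0 add0r mul0r add0r; exact: hb_graph_le hu.
- have h := c_ub (hb_graphZ hG (t^-1) hu).
  have -> : rnorm (rscale t x0 + u) = t * rnorm (rscale t^-1 u + x0).
    rewrite -[X in X * rnorm _](gtr0_norm tpos) -rnormZ rscaleDr rscaleA.
    by rewrite mulfV ?gt_eqF // rscale1 addrC.
  have : t * c <= t * (rnorm (rscale t^-1 u + x0) - t^-1 * a) by rewrite ler_pM2l.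
  rewrite mulrBr mulrA mulfV ?gt_eqF // mul1r; lra.
- have sp : 0 < - t by rewrite oppr_gt0.
  have h := c_lb (hb_graphZ hG ((- t)^-1) hu).
  have -> : rnorm (rscale t x0 + u) = - t * rnorm (rscale (- t)^-1 u - x0).
    rewrite -[X in X * rnorm _](gtr0_norm sp) -rnormZ rscaleDr rscaleA.
    rewrite mulfV ?gt_eqF // rscale1.
    by rewrite /rscale scalerN rmorphN scaleNr opprK addrC.
  have : (- t) * ((- t)^-1 * a - rnorm (rscale (- t)^-1 u - x0)) <= (- t) * c.
    by rewrite ler_pM2l.
  rewrite mulrBr mulrA mulfV ?gt_eqF // mul1r; lra.
Qed.

Lemma hb_graph_ext : ~ (exists a, G (x0, a)) -> hb_graph (graph_ext G x0 c).
Proof.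
move=> x0_out; split.
- move=> x a b [t [u [a1 [hu [-> ->]]]]] [t' [u' [a1' [hu' [e ->]]]]].
  have [tt'|tt'] := eqVneq t t'.
    by subst t'; rewrite (addrI _ e) in hu; rewrite (hb_graph_fun hG hu hu').
  (* otherwise [x0] would lie in the domain of [G] *)
  exfalso; apply: x0_out.
  have e' : rscale (t - t') x0 = u' - u.
    have e2 : rscale t x0 = rscale t' x0 + (u' - u) by rewrite addrA -e addrK.
    by rewrite rscaleDl rscaleN e2 addrC addKr.
  have := hb_graphZ hG ((t - t')^-1) (hb_graphD hG hu' (hb_graphZ hG (-1) hu)).
  rewrite rscaleN rscale1 -e' rscaleA mulVf ?subr_eq0 // rscale1.
  by exists ((t - t')^-1 * (a1' + -1 * a1)).
- exists 0, 0, 0; split; first exact: hb_graph0.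
  by rewrite rscale0 addr0 mul0r addr0.
- move=> x a x' a' s [t [u [a1 [hu [-> ->]]]]] [t' [u' [a1' [hu' [-> ->]]]]].
  exists (s * t + t'), (rscale s u + u'), (s * a1 + a1'); split.
    exact: hb_graph_comb.
  congr (_, _); first by rewrite rscaleDr rscaleA rscaleDl addrACA.
  by rewrite mulrDr mulrDl mulrA addrACA.
- by move=> x a [t [u [a1 [hu [-> ->]]]]]; exact: graph_ext_le.
- exists 0, y, (rnorm y); split; first exact: hb_graph_y.
  by rewrite rscale0 add0r mul0r add0r.
Qed.

End GraphExtension.

Lemma hb_graph_extend (G : set (X * R)) x0 :
  hb_graph G -> ~ (exists a, G (x0, a)) ->
  exists G', [/\ hb_graph G', G `<=` G' & exists c, G' (x0, c)].
Proof.
move=> hG x0_out.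
pose S : set R := fun r => exists u a, G (u, a) /\ r = a - rnorm (u - x0).
have sep u a v b : G (u, a) -> G (v, b) -> a - rnorm (u - x0) <= rnorm (v + x0) - b.
  move=> hu hv; have := hb_graph_le hG (hb_graphD hG hu hv).
  have := rnormD (u - x0) (v + x0).
  rewrite addrACA addNr addr0; lra.
have S_ub : ubound S (rnorm (0 + x0) - 0).
  by move=> r [u [a [hu ->]]]; apply: sep hu (hb_graph0 hG).
have S_n0 : S !=set0.
  by exists (0 - rnorm (0 - x0)); exists 0, 0; split => //; exact: hb_graph0.
have c_lb u a : G (u, a) -> a - rnorm (u - x0) <= sup S.
  by move=> hu; apply: ub_le_sup; [exists (rnorm (0 + x0) - 0) | exists u, a].
have c_ub v b : G (v, b) -> sup S <= rnorm (v + x0) - b.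
  by move=> hv; apply: ge_sup => // r [u [a [hu ->]]]; exact: sep hu hv.
exists (graph_ext G x0 (sup S)); split.
- exact: hb_graph_ext.
- move=> [u a] hu; exists 0, u, a; split => //.
  by rewrite rscale0 add0r mul0r add0r.
- exists (sup S), 1, 0, 0; split; first exact: hb_graph0.
  by rewrite rscale1 addr0 mul1r addr0.
Qed.

Lemma exists_total_hb_graph : exists M, hb_graph M /\ forall x, exists a, M (x, a).
Proof.
pose T := {G : set (X * R) | hb_graph G}.
pose le (s1 s2 : T) : bool := `[< proj1_sig s1 `<=` proj1_sig s2 >].
have [M Mmax] : exists M : T, premaximal le M.
  apply: (ZL_preorder (exist _ line_graph hb_graph_line)).
  - by move=> t; apply/asboolP.
  - move=> r s t /asboolP rs /asboolP st; apply/asboolP; exact: subset_trans rs st.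
  - move=> A Achain.
    have [[s As]|A0] := pselect (exists s, A s); last first.
      by exists (exist _ line_graph hb_graph_line) => s As; exfalso; apply: A0; exists s.
    pose U : set (X * R) := fun q => exists s, A s /\ proj1_sig s q.
    have common s1 s2 q1 q2 : A s1 -> A s2 -> proj1_sig s1 q1 -> proj1_sig s2 q2 ->
        exists s, [/\ A s, proj1_sig s q1 & proj1_sig s q2].
      move=> A1 A2 h1 h2; case: (Achain _ _ A1 A2) => /asboolP sub.
        by exists s2; split => //; exact: sub.
      by exists s1; split => //; exact: sub.
    have hU : hb_graph U.
      split.
      - move=> x a b [s1 [A1 h1]] [s2 [A2 h2]].
        have [s' [_ h1' h2']] := common _ _ _ _ A1 A2 h1 h2.
        exact: (hb_graph_fun (proj2_sig s') h1' h2').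
      - by exists s; split => //; exact: (hb_graph0 (proj2_sig s)).
      - move=> x a x' a' t [s1 [A1 h1]] [s2 [A2 h2]].
        have [s' [As' h1' h2']] := common _ _ _ _ A1 A2 h1 h2.
        by exists s'; split => //; exact: (hb_graph_comb (proj2_sig s')).
      - by move=> x a [s1 [A1 h1]]; exact: (hb_graph_le (proj2_sig s1) h1).
      - by exists s; split => //; exact: (hb_graph_y (proj2_sig s)).
    by exists (exist _ U hU) => s' As'; apply/asboolP => q hq; exists s'.
exists (proj1_sig M); split; first exact: (proj2_sig M).
move=> x; apply: contrapT => x_out.
have [G' [hG' sub [c hc]]] := hb_graph_extend (proj2_sig M) x_out.
have /asboolP /= sub' := Mmax (exist _ G' hG') (asboolT sub).
by apply: x_out; exists c; exact: sub'.
Qed.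

Lemma real_hahn_banach : exists rho : X -> R,
  [/\ (forall t x x', rho (rscale t x + x') = t * rho x + rho x'),
      (forall x, rho x <= rnorm x) & rho y = rnorm y].
Proof.
have [M [hM Mtot]] := exists_total_hb_graph.
pose rho x := proj1_sig (cid (Mtot x)).
have rhoM x : M (x, rho x) := proj2_sig (cid (Mtot x)).
exists rho; split.
- by move=> t x x'; apply: (hb_graph_fun hM (rhoM _)); exact: hb_graph_comb.
- by move=> x; exact: (hb_graph_le hM (rhoM x)).
- exact: (hb_graph_fun hM (rhoM y) (hb_graph_y hM)).
Qed.

Lemma separating_functional : exists g : X -> C, bounded_functional g /\ g y = 1.
Proof.
have [rho [rho_lin rho_le rho_y]] := real_hahn_banach.
have rho0 : rho 0 = 0.
  have := rho_lin 1 0 0; rewrite rscale1 addr0 mul1r => h.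
  by apply: (addrI (rho 0)); rewrite addr0 -h.
have rhoN x : rho (- x) = - rho x.
  by have := rho_lin (-1) x 0; rewrite rscaleN rscale1 addr0 rho0 addr0 mulN1r.
(* the complexification of [rho] *)
pose g x := (rho x)%:C - 'i * (rho ('i *: x))%:C.
have g_lin : linear_fun g.
  have scaleCE (b z : C) : b *: z = b * z by [].
  move=> a x x'; rewrite /g scaleCE scalerDr scalerA [('i * a)]mulrC.
  rewrite [(a * 'i) *: x]scale_ReIm [a *: x]scale_ReIm ReiNIm ImiRe -!addrA !rho_lin.
  move: (complex.Re a) (complex.Im a) (complexE a) => ar ai ->.
  rewrite !rmorphD !rmorphM !rmorphN /=.
  have ReIm_identity (A1 A2 R1 R2 R3 R4 I : C) : I * I = -1 ->
      A1 * R1 + (A2 * R2 + R3) - I * (- A2 * R1 + (A1 * R2 + R4)) =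
      (A1 + I * A2) * (R1 - I * R2) + (R3 - I * R4).
    move=> I2; apply/eqP; rewrite -subr_eq0; apply/eqP.
    by transitivity ((1 + I * I) * (A2 * R2)); [ring | rewrite I2 addrN mul0r].
  by apply: ReIm_identity; rewrite -expr2 sqr_i.
have g_bd x : `|g x| <= 2 * `|x|.
  rewrite /g; apply: le_trans (ler_normB _ _) _.
  rewrite normrM normc_i mul1r !normc_real rnormE mulr2n mulrDl mul1r.
  have rho_abs z : `|rho z| <= rnorm z.
    by rewrite ler_norml rho_le andbT lerNl -rhoN -(rnormN z) rho_le.
  by apply: lerD; rewrite lecR // -(rnorm_i x).
have gy0 : g y != 0.
  apply/eqP => /(congr1 (@complex.Re R)); rewrite /g raddfB /=.
  rewrite mul0r mulr0 subr0 subr0 rho_y => h; move: y_neq0.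
  by rewrite -normr_eq0 rnormE h rmorph0 eqxx.
exists (fun x => (g y)^-1 * g x); split; last by rewrite mulVf.
by apply: bounded_functionalZ; split => //; exists 2.
Qed.

End HahnBanach.

Section Biorthogonal.
Variables (R : realType) (X : normedModType R[i]).
Local Notation C := R[i].

Definition free_family n (e : nat -> X) :=
  forall c : nat -> C, \sum_(i < n) c i *: e i = 0 -> forall i, (i < n)%N -> c i = 0.

Lemma free_family_prefix n e : free_family n.+1 e -> free_family n e.
Proof.
move=> free_e c hc i hi.
have := free_e (fun i => if (i < n)%N then c i else 0).
rewrite big_ord_recr /= ltnn scale0r addr0.
under eq_bigr => j _ do rewrite ltn_ord.
by move=> /(_ hc i (ltnW hi)); rewrite hi.
Qed.

Lemma free_family_last_neq0 n e (c : nat -> C) :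
  free_family n.+1 e -> e n - \sum_(j < n) c j *: e j != 0.
Proof.
move=> free_e; apply/eqP => he.
have := free_e (fun i => if (i < n)%N then - c i else 1).
rewrite big_ord_recr /= ltnn scale1r.
under eq_bigr => j _ do rewrite ltn_ord scaleNr.
by rewrite sumrN addrC he => /(_ erefl n (ltnSn n)); rewrite ltnn => /eqP; rewrite oner_eq0.
Qed.

Lemma sum_mul_delta n k (F : nat -> C) : (k < n)%N ->
  \sum_(j < n) F j * (nat_of_ord j == k)%:R = F k.
Proof.
move=> hk; rewrite (bigD1 (Ordinal hk)) //= eqxx mulr1 big1 ?addr0 // => j hj.
suff /negbTE -> : nat_of_ord j != k by rewrite mulr0.
by apply: contra hj => /eqP hjk; apply/eqP; apply: val_inj.
Qed.

(* The new functional [fn] is a Hahn-Banach functional normed at the component of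
   [e n] off [span (e 0, ..., e (n-1))], corrected so as to vanish on that span. *)
Lemma biorthogonal_functionals n (e : nat -> X) : free_family n e ->
  exists f : nat -> X -> C, (forall i, bounded_functional (f i)) /\
    forall i j, (i < n)%N -> (j < n)%N -> f i (e j) = (i == j)%:R.
Proof.
elim: n => [|n IH] free_e.
  exists (fun _ _ => 0); split => // i; split; first by move=> a x y; rewrite addr0 scaler0.
  by exists 0 => x; rewrite normr0 mul0r.
have [h [h_bd h_dual]] := IH (free_family_prefix free_e).
have [g [g_bd gw]] :=
  separating_functional (free_family_last_neq0 (fun j => h j (e n)) free_e).
have g_lin := g_bd.1.
pose fn x := g x - \sum_(j < n) g (e j) * h j x.
have fn_bd : bounded_functional fn.
  apply: bounded_functionalB => //.
  exact: (bounded_functional_sum n (fun j => bounded_functionalZ (g (e j)) (h_bd j))).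
have fn_e k : (k < n)%N -> fn (e k) = 0.
  move=> hk; rewrite /fn.
  have -> : \sum_(j < n) g (e j) * h j (e k) =
             \sum_(j < n) g (e j) * (nat_of_ord j == k)%:R.
    by apply: eq_bigr => j _; rewrite h_dual.
  by rewrite (sum_mul_delta (fun j => g (e j)) hk) subrr.
have fn_en : fn (e n) = 1.
  rewrite /fn -gw linear_funB // (linear_fun_sum g_lin n (fun j => h j (e n)) e).
  by congr (_ - _); apply: eq_bigr => j _; rewrite mulrC.
exists (fun i => if i == n then fn else fun x => h i x - h i (e n) * fn x); split.
  move=> i; case: ifP => _ //.
  by apply: bounded_functionalB => //; exact: bounded_functionalZ.
move=> i j; rewrite !ltnS => hi hj.
have [->|ni] := eqVneq i n; have [->|nj] := eqVneq j n.
- by rewrite fn_en.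
- by rewrite fn_e ?ltn_neqAle ?nj // eq_sym (negbTE nj).
- by rewrite fn_en mulr1 subrr (negbTE ni).
- have [ltin ltjn] : (i < n)%N /\ (j < n)%N by rewrite !ltn_neqAle ni nj.
  by rewrite fn_e // mulr0 subr0 h_dual.
Qed.

End Biorthogonal.

Section SmallFamilies.
Variables (R : realType) (X : normedModType R[i]).
Local Notation C := R[i].

Definition free2 (a b : X) := forall c0 c1 : C,
  c0 *: a + c1 *: b = 0 -> c0 = 0 /\ c1 = 0.
Definition free3 (a b c : X) := forall c0 c1 c2 : C,
  c0 *: a + c1 *: b + c2 *: c = 0 -> [/\ c0 = 0, c1 = 0 & c2 = 0].
Definition free4 (a b c d : X) := forall c0 c1 c2 c3 : C,
  c0 *: a + c1 *: b + c2 *: c + c3 *: d = 0 -> [/\ c0 = 0, c1 = 0, c2 = 0 & c3 = 0].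

Definition family4 (a b c d : X) : nat -> X :=
  fun i => match i with 0 => a | 1 => b | 2 => c | _ => d end.

Lemma free3_family a b c : free3 a b c -> free_family 3 (family4 a b c 0).
Proof.
move=> h e; rewrite !big_ord_recr big_ord0 /= add0r => /h [h0 h1 h2] i.
by case: i => [|[|[|]]].
Qed.

Lemma free4_family a b c d : free4 a b c d -> free_family 4 (family4 a b c d).
Proof.
move=> h e; rewrite !big_ord_recr big_ord0 /= add0r => /h [h0 h1 h2 h3] i.
by case: i => [|[|[|[|]]]].
Qed.

Lemma dual_basis3 a b c : free3 a b c -> exists f0 f1 f2 : X -> C,
  [/\ bounded_functional f0, bounded_functional f1 & bounded_functional f2] /\
  [/\ [/\ f0 a = 1, f0 b = 0 & f0 c = 0],
      [/\ f1 a = 0, f1 b = 1 & f1 c = 0] &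
      [/\ f2 a = 0, f2 b = 0 & f2 c = 1]].
Proof.
move=> /free3_family /biorthogonal_functionals [f [f_bd f_dual]].
exists (f 0%N), (f 1%N), (f 2%N); split; first by split; apply: f_bd.
have f_at i : (i < 3)%N ->
    [/\ f i a = (i == 0)%N%:R, f i b = (i == 1)%N%:R & f i c = (i == 2)%N%:R].
  by move=> hi; split;
    [exact: (f_dual i 0%N) | exact: (f_dual i 1%N) | exact: (f_dual i 2%N)].
by split; [exact: (f_at 0%N) | exact: (f_at 1%N) | exact: (f_at 2%N)].
Qed.

Lemma dual_basis4 a b c d : free4 a b c d -> exists f0 f1 f2 f3 : X -> C,
  [/\ bounded_functional f0, bounded_functional f1,
      bounded_functional f2 & bounded_functional f3] /\
  [/\ [/\ f0 a = 1, f0 b = 0, f0 c = 0 & f0 d = 0],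
      [/\ f1 a = 0, f1 b = 1, f1 c = 0 & f1 d = 0],
      [/\ f2 a = 0, f2 b = 0, f2 c = 1 & f2 d = 0] &
      [/\ f3 a = 0, f3 b = 0, f3 c = 0 & f3 d = 1]].
Proof.
move=> /free4_family /biorthogonal_functionals [f [f_bd f_dual]].
exists (f 0%N), (f 1%N), (f 2%N), (f 3%N); split; first by split; apply: f_bd.
have f_at i : (i < 4)%N -> [/\ f i a = (i == 0)%N%:R, f i b = (i == 1)%N%:R,
    f i c = (i == 2)%N%:R & f i d = (i == 3)%N%:R].
  by move=> hi; split; [exact: (f_dual i 0%N) | exact: (f_dual i 1%N)
    | exact: (f_dual i 2%N) | exact: (f_dual i 3%N)].
by split; [exact: (f_at 0%N) | exact: (f_at 1%N) | exact: (f_at 2%N) | exact: (f_at 3%N)].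
Qed.

Lemma nontrivial_rel2 (a b : X) : ~ free2 a b ->
  exists c0 c1 : C, c0 *: a + c1 *: b = 0 /\ ~ (c0 = 0 /\ c1 = 0).
Proof.
move=> nfree; apply: contrapT => nrel; apply: nfree => c0 c1 e.
by apply: contrapT => nz; apply: nrel; exists c0, c1.
Qed.

Lemma nontrivial_rel3 (a b c : X) : ~ free3 a b c ->
  exists c0 c1 c2 : C, c0 *: a + c1 *: b + c2 *: c = 0 /\ ~ [/\ c0 = 0, c1 = 0 & c2 = 0].
Proof.
move=> nfree; apply: contrapT => nrel; apply: nfree => c0 c1 c2 e.
by apply: contrapT => nz; apply: nrel; exists c0, c1, c2.
Qed.

Lemma nontrivial_rel4 (a b c d : X) : ~ free4 a b c d ->
  exists c0 c1 c2 c3 : C, c0 *: a + c1 *: b + c2 *: c + c3 *: d = 0 /\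
    ~ [/\ c0 = 0, c1 = 0, c2 = 0 & c3 = 0].
Proof.
move=> nfree; apply: contrapT => nrel; apply: nfree => c0 c1 c2 c3 e.
by apply: contrapT => nz; apply: nrel; exists c0, c1, c2, c3.
Qed.

Lemma solve_scale (c : C) (v w : X) : c != 0 -> w + c *: v = 0 -> v = (- c^-1) *: w.
Proof.
by move=> c0 /addr0_eq e; rewrite scaleNr -scalerN e scalerA mulVf // scale1r.
Qed.

Lemma infinite_dimensional_free3 : infinite_dimensional X -> exists a b c : X, free3 a b c.
Proof.
move=> infX; have [a ha] := infX [::]; have [b hb] := infX [:: a].
have [c hc] := infX [:: a; b].
have a0 : a != 0 by have := ha (fun _ => 0); rewrite /= big_ord0.
exists a, b, c => c0 c1 c2 e.
have [c2z|c2n] := eqVneq c2 0; last first.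
  have := hc (fun i => if nat_of_ord i == 0%N then - c2^-1 * c0 else - c2^-1 * c1).
  rewrite /= !big_ord_recr big_ord0 /= add0r.
  by rewrite (solve_scale c2n e) scalerDr !scalerA !mulNr eqxx.
rewrite c2z scale0r addr0 in e.
have [c1z|c1n] := eqVneq c1 0; last first.
  have := hb (fun i => - c1^-1 * c0); rewrite /= !big_ord_recr big_ord0 /= add0r.
  by rewrite (solve_scale c1n e) scalerA mulNr eqxx.
rewrite c1z scale0r addr0 in e; move/eqP: e; rewrite scaler_eq0 (negbTE a0) orbF.
by move/eqP.
Qed.

Definition lcomb2 (a b : X) (s t : C) := s *: a + t *: b.
Definition lcomb3 (a b c : X) (s t u : C) := s *: a + t *: b + u *: c.
Definition lcomb4 (a b c d : X) (s t u v : C) := s *: a + t *: b + u *: c + v *: d.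

Lemma lcomb2D a b s t s' t' :
  lcomb2 a b s t + lcomb2 a b s' t' = lcomb2 a b (s + s') (t + t').
Proof. by rewrite /lcomb2 addrACA !scalerDl. Qed.

Lemma lcomb2Z a b k s t : k *: lcomb2 a b s t = lcomb2 a b (k * s) (k * t).
Proof. by rewrite /lcomb2 scalerDr !scalerA. Qed.

Lemma lcomb3D a b c s t u s' t' u' :
  lcomb3 a b c s t u + lcomb3 a b c s' t' u' = lcomb3 a b c (s + s') (t + t') (u + u').
Proof. by rewrite /lcomb3 addrACA [X in X + _]addrACA !scalerDl. Qed.

Lemma lcomb3Z a b c k s t u :
  k *: lcomb3 a b c s t u = lcomb3 a b c (k * s) (k * t) (k * u).
Proof. by rewrite /lcomb3 !scalerDr !scalerA. Qed.

Lemma lcomb3_e1 (a b c : X) : lcomb3 a b c 1 0 0 = a.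
Proof. by rewrite /lcomb3 scale1r !scale0r !addr0. Qed.

Lemma lcomb3_e2 (a b c : X) : lcomb3 a b c 0 1 0 = b.
Proof. by rewrite /lcomb3 scale1r !scale0r add0r addr0. Qed.

Lemma lcomb3_e3 (a b c : X) : lcomb3 a b c 0 0 1 = c.
Proof. by rewrite /lcomb3 scale1r !scale0r !add0r. Qed.

Lemma linear_fun_lcomb3 (A : X -> X) (a b c : X) (s t u : C) : linear_fun A ->
  A (lcomb3 a b c s t u) = s *: A a + t *: A b + u *: A c.
Proof. by move=> A_lin; rewrite /lcomb3 !(linear_funD A_lin) !(linear_funZ A_lin). Qed.

Lemma lcomb3_inj a b c s t u s' t' u' : free3 a b c ->
  lcomb3 a b c s t u = lcomb3 a b c s' t' u' -> [/\ s = s', t = t' & u = u'].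
Proof.
move=> free_abc e.
have : lcomb3 a b c s t u + (-1) *: lcomb3 a b c s' t' u' = 0 by rewrite e scaleN1r subrr.
rewrite lcomb3Z lcomb3D !mulN1r => /free_abc [/eqP h1 /eqP h2 /eqP h3].
by split; apply/eqP; rewrite -subr_eq0.
Qed.

Lemma lcomb4D a b c d s t u v s' t' u' v' :
  lcomb4 a b c d s t u v + lcomb4 a b c d s' t' u' v' =
  lcomb4 a b c d (s + s') (t + t') (u + u') (v + v').
Proof.
by rewrite /lcomb4 addrACA [X in X + _]addrACA [X in X + _ + _]addrACA !scalerDl.
Qed.

Lemma lcomb4Z a b c d k s t u v :
  k *: lcomb4 a b c d s t u v = lcomb4 a b c d (k * s) (k * t) (k * u) (k * v).
Proof. by rewrite /lcomb4 !scalerDr !scalerA. Qed.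

Lemma lcomb4_inj a b c d s t u v s' t' u' v' : free4 a b c d ->
  lcomb4 a b c d s t u v = lcomb4 a b c d s' t' u' v' ->
  [/\ s = s', t = t', u = u' & v = v'].
Proof.
move=> free_abcd e.
have : lcomb4 a b c d s t u v + (-1) *: lcomb4 a b c d s' t' u' v' = 0.
  by rewrite e scaleN1r subrr.
rewrite lcomb4Z lcomb4D !mulN1r => /free_abcd [/eqP h1 /eqP h2 /eqP h3 /eqP h4].
by split; apply/eqP; rewrite -subr_eq0.
Qed.

(* The coordinate matrices of three elements of [span (a, b)] have a nonzero
   kernel vector; it is found among the 2x2 minors and the rows. *)
Lemma lcomb2_not_free3 (a b : X) (a1 b1 a2 b2 a3 b3 : C) :
  ~ free3 (lcomb2 a b a1 b1) (lcomb2 a b a2 b2) (lcomb2 a b a3 b3).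
Proof.
move=> hfree.
have key (c1 c2 c3 : C) : c1 * a1 + c2 * a2 + c3 * a3 = 0 ->
    c1 * b1 + c2 * b2 + c3 * b3 = 0 -> [/\ c1 = 0, c2 = 0 & c3 = 0].
  move=> ea eb; apply: hfree.
  by rewrite !lcomb2Z !lcomb2D ea eb /lcomb2 !scale0r addr0.
have [x1 x2 x3] := key (a2 * b3 - a3 * b2) (a3 * b1 - a1 * b3) (a1 * b2 - a2 * b1)
  ltac:(ring) ltac:(ring).
have [ha2 na1 _] := key a2 (- a1) 0 ltac:(ring)
  ltac:(transitivity (- (a1 * b2 - a2 * b1)); [ring | by rewrite x3 oppr0]).
have [ha3 _ _] := key a3 0 (- a1) ltac:(ring)
  ltac:(transitivity (a3 * b1 - a1 * b3); [ring | exact: x2]).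
have ha1 : a1 = 0 by rewrite -[a1]opprK na1 oppr0.
have [hb2 nb1 _] := key b2 (- b1) 0 ltac:(rewrite ha1 ha2 ha3; ring) ltac:(ring).
have [hb3 _ _] := key b3 0 (- b1) ltac:(rewrite ha1 ha2 ha3; ring) ltac:(ring).
have hb1 : b1 = 0 by rewrite -[b1]opprK nb1 oppr0.
have [] := key 1 0 0 ltac:(rewrite ha1 ha2 ha3; ring) ltac:(rewrite hb1 hb2 hb3; ring).
by move/eqP; rewrite oner_eq0.
Qed.

End SmallFamilies.

Section JordanCores.
Variables (R : realType) (X : normedModType R[i]).
Local Notation C := R[i].

Lemma jprod_linear (T S : X -> X) : linear_fun T -> linear_fun S -> linear_fun (jprod T S).
Proof.
by move=> T_lin S_lin a x y; rewrite /jprod S_lin T_lin T_lin S_lin scalerDr addrACA.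
Qed.

Lemma analytic_core_eigen (A : X -> X) (lam : C) (w : X) :
  linear_fun A -> lam != 0 -> A w = lam *: w -> analytic_core A w.
Proof.
move=> A_lin lam0 Aw; exists `|lam^-1|, (fun n => lam^-1 ^+ n *: w).
split; first by rewrite normr_gt0 invr_eq0.
split; first by rewrite expr0 scale1r.
split; last by move=> n; rewrite normrZ normrX.
move=> n; rewrite linear_funZ // Aw scalerA; congr (_ *: w).
by rewrite exprSr -mulrA mulVf // mulr1.
Qed.

Lemma analytic_core_range (A : X -> X) w : analytic_core A w -> exists z, A z = w.
Proof. by move=> [d [xs [_ [<- [Axs _]]]]]; exists (xs 1%N). Qed.

Definition has_jordan_core (P : set X -> Prop) (F : X -> X) :=
  exists T, bounded_op T /\ P (analytic_core (jprod T F)).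

Definition contains_free3 (K : set X) :=
  exists w1 w2 w3, [/\ K w1, K w2, K w3 & free3 w1 w2 w3].

Lemma lcomb3_free3 (a b c : X) (p1 p2 p3 q1 q2 q3 r1 r2 r3 : C) : free3 a b c ->
  (forall c1 c2 c3 : C, c1 * p1 + c2 * q1 + c3 * r1 = 0 ->
      c1 * p2 + c2 * q2 + c3 * r2 = 0 -> c1 * p3 + c2 * q3 + c3 * r3 = 0 ->
      [/\ c1 = 0, c2 = 0 & c3 = 0]) ->
  free3 (lcomb3 a b c p1 p2 p3) (lcomb3 a b c q1 q2 q3) (lcomb3 a b c r1 r2 r3).
Proof.
move=> free_abc hc c1 c2 c3; rewrite !lcomb3Z !lcomb3D => e.
have : lcomb3 a b c (c1 * p1 + c2 * q1 + c3 * r1) (c1 * p2 + c2 * q2 + c3 * r2)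
  (c1 * p3 + c2 * q3 + c3 * r3) = lcomb3 a b c 0 0 0 by rewrite e /lcomb3 !scale0r !addr0.
by move=> /(lcomb3_inj free_abc) [e1 e2 e3]; apply: hc.
Qed.

(* On [w, Gw, G^2 w] the Jordan product with [T] is triangular with diagonal 1, 3, 2. *)
Lemma jordan_core_free3_cyclic (G : X -> X) (w : X) :
  bounded_op G -> free3 w (G w) (G (G w)) -> has_jordan_core contains_free3 G.
Proof.
move=> G_bd free_w; have G_lin := bounded_op_linear G_bd.
have [f0 [f1 [f2 [[_ b1 b2] [[_ _ _] [h10 h11 h12] [h20 h21 h22]]]]]] := dual_basis3 free_w.
pose T x := f1 x *: w + (2 * f2 x) *: G w.
have T_bd : bounded_op T.
  by apply: bounded_opD; apply: bounded_op_rank1 => //; exact: bounded_functionalZ.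
exists T; split => //.
have A_lin := jprod_linear (bounded_op_linear T_bd) G_lin.
pose bet := f1 (G (G (G w))); pose gam := f2 (G (G (G w))).
have A1 : jprod T G w = w.
  rewrite /jprod /T h11 h21 h10 h20 mulr0 !scale0r scale1r !addr0.
  by rewrite (linear_fun0 G_lin) addr0.
have A2 : jprod T G (G w) = 3%:R *: G w.
  rewrite /jprod /T h12 h22 h11 h21 mulr0 mulr1 !scale0r !add0r scale1r !addr0.
  by rewrite -{2}(scale1r (G w)) -scalerDl natr1.
have A3 : jprod T G (G (G w)) = lcomb3 w (G w) (G (G w)) bet (2 * gam) 2.
  by rewrite /jprod /T h12 h22 mulr1 scale0r add0r (linear_funZ G_lin).
exists w, (G w), (lcomb3 w (G w) (G (G w)) bet (- (2 * gam)) 1); split.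
- by apply: (analytic_core_eigen A_lin (oner_neq0 _)); rewrite A1 scale1r.
- by apply: (analytic_core_eigen A_lin (lam := 3%:R)); rewrite ?pnatr_eq0.
- apply: (analytic_core_eigen A_lin (lam := 2%:R)); first by rewrite pnatr_eq0.
  have A1c : jprod T G w = lcomb3 w (G w) (G (G w)) 1 0 0 by rewrite A1 lcomb3_e1.
  have A2c : jprod T G (G w) = lcomb3 w (G w) (G (G w)) 0 3%:R 0.
    by rewrite A2 /lcomb3 !scale0r add0r addr0.
  rewrite linear_fun_lcomb3 // A1c A2c A3 !lcomb3Z !lcomb3D; congr lcomb3; ring.
- suff : free3 (lcomb3 w (G w) (G (G w)) 1 0 0) (lcomb3 w (G w) (G (G w)) 0 1 0)
      (lcomb3 w (G w) (G (G w)) bet (- (2 * gam)) 1) by rewrite lcomb3_e1 lcomb3_e2.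
  apply: lcomb3_free3 => // c1 c2 c3 e1 e2 e3.
  have c3z : c3 = 0 by rewrite -e3; ring.
  by split => //; [rewrite -e1 c3z; ring | rewrite -e2 c3z; ring].
Qed.

Lemma jordan_core_free3_id (G T : X -> X) : bounded_op G -> bounded_op T ->
  infinite_dimensional X -> (forall x, jprod T G x = x) -> has_jordan_core contains_free3 G.
Proof.
move=> G_bd T_bd infX A_id; exists T; split => //.
have A_lin := jprod_linear (bounded_op_linear T_bd) (bounded_op_linear G_bd).
have [a [b [c free_abc]]] := infinite_dimensional_free3 infX.
by exists a, b, c; split => //;
  apply: (analytic_core_eigen A_lin (oner_neq0 _)); rewrite A_id scale1r.
Qed.

Lemma jordan_core_free3_quadratic (G : X -> X) (a b : C) :
  bounded_op G -> infinite_dimensional X ->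
  (forall x, G (G x) = a *: G x + b *: x) -> b != 0 -> has_jordan_core contains_free3 G.
Proof.
move=> G_bd infX Gq b0; have G_lin := bounded_op_linear G_bd.
pose T x := (2 * b)^-1 *: (G x + (- a) *: x).
have T_bd : bounded_op T.
  by apply/bounded_opZ/(bounded_opD G_bd)/bounded_opZ; exact: bounded_op_id.
apply: (jordan_core_free3_id G_bd T_bd infX) => x.
rewrite /jprod /T (linear_funZ G_lin) (linear_funD G_lin) (linear_funZ G_lin) Gq.
rewrite addrAC scaleNr subrr add0r -scalerDl scalerA.
have -> : ((2 * b)^-1 + (2 * b)^-1) * b = 1 by field.
by rewrite scale1r.
Qed.

Lemma jordan_core_free3_scalar (G : X -> X) (a : C) :
  bounded_op G -> infinite_dimensional X ->
  (forall x, G x = a *: x) -> a != 0 -> has_jordan_core contains_free3 G.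
Proof.
move=> G_bd infX Ga a0; have G_lin := bounded_op_linear G_bd.
pose T (x : X) := (2 * a)^-1 *: x.
have T_bd : bounded_op T by apply: bounded_opZ; exact: bounded_op_id.
apply: (jordan_core_free3_id G_bd T_bd infX) => x.
rewrite /jprod /T (linear_funZ G_lin) !Ga !scalerA -scalerDl.
have -> : (2 * a)^-1 * a + (2 * a)^-1 * a = 1 by field.
by rewrite scale1r.
Qed.

Lemma sqr_scale_kernel_free3 (G : X -> X) (a : C) (z x1 x2 : X) : linear_fun G ->
  (forall x, G (G x) = a *: G x) -> a != 0 -> G z != a *: z ->
  free2 (G x1) (G x2) -> exists k, G k = 0 /\ free3 k (G x1) (G x2).
Proof.
move=> G_lin Gq a0 Gz free_u; pose k := z - a^-1 *: G z.
have Gk : G k = 0.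
  by rewrite /k (linear_funB G_lin) (linear_funZ G_lin) Gq scalerA mulVf // scale1r subrr.
have k0 : k != 0.
  apply: contra Gz; rewrite /k subr_eq0 => /eqP ez; apply/eqP.
  by rewrite {2}ez scalerA mulfV // scale1r.
exists k; split => // c0 c1 c2 e.
have := congr1 G e; rewrite (linear_fun0 G_lin) !(linear_funD G_lin) !(linear_funZ G_lin).
rewrite Gk !Gq scaler0 add0r !scalerA => /free_u [/eqP e1 /eqP e2].
move: e1 e2; rewrite !mulf_eq0 (negbTE a0) !orbF => /eqP c1z /eqP c2z.
move: e; rewrite c1z c2z !scale0r !addr0 => /eqP; rewrite scaler_eq0 (negbTE k0) orbF.
by move/eqP.
Qed.

(* [T] swaps [k] and [u1] and scales [u2], so that [k +- u1] and [u2] are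
   eigenvectors of [TG + GT] for [a], [- a] and [1]. *)
Lemma jordan_core_free3_kernel (G : X -> X) (a : C) (k u1 u2 : X) :
  bounded_op G -> a != 0 -> free3 k u1 u2 ->
  G k = 0 -> G u1 = a *: u1 -> G u2 = a *: u2 -> has_jordan_core contains_free3 G.
Proof.
move=> G_bd a0 free_k Gk Gu1 Gu2; have G_lin := bounded_op_linear G_bd.
have [f0 [f1 [f2 [[b0 b1 b2] [[h00 h01 h02] [h10 h11 h12] [h20 h21 h22]]]]]] :=
  dual_basis3 free_k.
pose T x := f0 x *: u1 + f1 x *: k + ((2 * a)^-1 * f2 x) *: u2.
have T_bd : bounded_op T.
  apply: bounded_opD; first by apply: bounded_opD; exact: bounded_op_rank1.
  by apply: bounded_op_rank1; apply: bounded_functionalZ.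
have T_lin := bounded_op_linear T_bd.
exists T; split => //.
have A_lin := jprod_linear T_lin G_lin.
have Ak : jprod T G k = lcomb3 k u1 u2 0 a 0.
  rewrite /jprod Gk (linear_fun0 T_lin) add0r /T h00 h10 h20 mulr0 !scale0r scale1r.
  by rewrite !addr0 Gu1 /lcomb3 !scale0r add0r addr0.
have Au1 : jprod T G u1 = lcomb3 k u1 u2 a 0 0.
  rewrite /jprod Gu1 (linear_funZ T_lin) /T h01 h11 h21 mulr0 !scale0r scale1r add0r.
  by rewrite !addr0 Gk addr0 /lcomb3 !scale0r !addr0.
have Au2 : jprod T G u2 = lcomb3 k u1 u2 0 0 1.
  rewrite /jprod Gu2 (linear_funZ T_lin) /T h02 h12 h22 mulr1 !scale0r !add0r.
  rewrite (linear_funZ G_lin) Gu2 !scalerA -scalerDl /lcomb3 !scale0r !add0r.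
  by congr (_ *: _); field.
have Acomb s t u : jprod T G (lcomb3 k u1 u2 s t u) = lcomb3 k u1 u2 (a * t) (a * s) u.
  by rewrite linear_fun_lcomb3 // Ak Au1 Au2 !lcomb3Z !lcomb3D; congr lcomb3; ring.
exists (lcomb3 k u1 u2 1 1 0), (lcomb3 k u1 u2 1 (-1) 0), (lcomb3 k u1 u2 0 0 1); split.
- by apply: (analytic_core_eigen A_lin a0); rewrite Acomb lcomb3Z; congr lcomb3; ring.
- apply: (analytic_core_eigen A_lin (lam := - a)); first by rewrite oppr_eq0.
  by rewrite Acomb lcomb3Z; congr lcomb3; ring.
- apply: (analytic_core_eigen A_lin (oner_neq0 _)).
  by rewrite Acomb lcomb3Z; congr lcomb3; ring.
- apply: lcomb3_free3 => // c1 c2 c3 e1 e2 e3.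
  have c3z : c3 = 0 by rewrite -e3; ring.
  have s1 : c1 + c2 = 0 by rewrite -e1 c3z; ring.
  have s2 : c1 - c2 = 0 by rewrite -e2 c3z; ring.
  have : 2 * c1 = 0 by transitivity ((c1 + c2) + (c1 - c2)); [ring | rewrite s1 s2 addr0].
  move=> /eqP; rewrite mulf_eq0 pnatr_eq0 /= => /eqP c1z.
  by split => //; move: s1; rewrite c1z add0r.
Qed.

Lemma jordan_core_free3_sqr_scale (G : X -> X) (a : C) (z x1 x2 : X) : bounded_op G ->
  (forall x, G (G x) = a *: G x) -> a != 0 -> G z != a *: z ->
  free2 (G x1) (G x2) -> has_jordan_core contains_free3 G.
Proof.
move=> G_bd G2 a0 Gz free_u.
have [k [Gk free_k]] := sqr_scale_kernel_free3 (bounded_op_linear G_bd) G2 a0 Gz free_u.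
exact: jordan_core_free3_kernel G_bd a0 free_k Gk (G2 x1) (G2 x2).
Qed.

(* With [G^2 = 0], [T] sends [u1 = G x1] and [u2 = G x2] back to [x1] and [x2]; then
   [x1], [x2] and [u1] are fixed by [TG + GT]. *)
Lemma jordan_core_free3_sqr0 (G : X -> X) (x1 x2 : X) : bounded_op G ->
  (forall x, G (G x) = 0) -> free2 (G x1) (G x2) -> has_jordan_core contains_free3 G.
Proof.
move=> G_bd G2 free_u; have G_lin := bounded_op_linear G_bd.
set u1 := G x1 in free_u *; set u2 := G x2 in free_u *.
have Gu1 : G u1 = 0 by rewrite /u1 G2.
have Gu2 : G u2 = 0 by rewrite /u2 G2.
have free_x : free4 x1 x2 u1 u2.
  move=> c0 c1 c2 c3 e; have := congr1 G e.
  rewrite (linear_fun0 G_lin) !(linear_funD G_lin) !(linear_funZ G_lin) Gu1 Gu2.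
  rewrite !scaler0 !addr0 => /free_u [c0z c1z].
  by move: e; rewrite c0z c1z !scale0r !add0r => /free_u [].
have [f0 [f1 [f2 [f3 [[_ _ b2 b3] [_ _ [h20 h21 h22 h23] [h30 h31 h32 h33]]]]]]] :=
  dual_basis4 free_x.
pose T x := f2 x *: x1 + f3 x *: x2.
have T_bd : bounded_op T by apply: bounded_opD; exact: bounded_op_rank1.
have T_lin := bounded_op_linear T_bd.
exists T; split => //.
have A_lin := jprod_linear T_lin G_lin.
exists x1, x2, u1; split.
- apply: (analytic_core_eigen A_lin (oner_neq0 _)).
  by rewrite /jprod /T h22 h32 h20 h30 !scale0r scale1r !addr0 (linear_fun0 G_lin) addr0.
- apply: (analytic_core_eigen A_lin (oner_neq0 _)).
  by rewrite /jprod /T h23 h33 h21 h31 !scale0r scale1r !add0r (linear_fun0 G_lin) addr0.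
- apply: (analytic_core_eigen A_lin (oner_neq0 _)).
  by rewrite /jprod Gu1 (linear_fun0 T_lin) add0r /T h22 h32 !scale0r scale1r addr0 scale1r.
- move=> c0 c1 c2 e.
  have : c0 *: x1 + c1 *: x2 + c2 *: u1 + 0 *: u2 = 0 by rewrite scale0r addr0.
  by move=> /free_x [].
Qed.

End JordanCores.

Arguments contains_free3 {R X}.

Lemma quadratic_eq0_on_units (F : numFieldType) (k0 k1 k2 : F) :
  (forall t : F, t != 0 -> k0 + k1 * t + k2 * t ^+ 2 = 0) -> [/\ k0 = 0, k1 = 0 & k2 = 0].
Proof.
move=> Q; have Q1 := Q 1 (oner_neq0 _).
have Q2 := Q 2%:R ltac:(by rewrite pnatr_eq0).
have Q3 := Q 3%:R ltac:(by rewrite pnatr_eq0).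
have k2z : k2 = 0.
  have : 2%:R * k2 = 0.
    transitivity ((k0 + k1 * 3%:R + k2 * 3%:R ^+ 2)
      - 2%:R * (k0 + k1 * 2%:R + k2 * 2%:R ^+ 2) + (k0 + k1 * 1 + k2 * 1 ^+ 2)).
      by ring.
    by rewrite Q1 Q2 Q3; ring.
  by move/eqP; rewrite mulf_eq0 pnatr_eq0 => /eqP.
have k1z : k1 = 0.
  transitivity ((k0 + k1 * 2%:R + k2 * 2%:R ^+ 2) - (k0 + k1 * 1 + k2 * 1 ^+ 2)
    - 3%:R * k2); first by ring.
  by rewrite Q1 Q2 k2z; ring.
by split => //; move: Q1; rewrite k1z k2z !mul0r !addr0.
Qed.

Section LocallyQuadratic.
Variables (R : realType) (X : normedModType R[i]).
Local Notation C := R[i].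
Variable G : X -> X.
Hypothesis G_lin : linear_fun G.

Lemma quadratic_rel_of_not_free3 w : ~ free3 w (G w) (G (G w)) ->
  exists al be : C, G (G w) = al *: G w + be *: w.
Proof.
move=> /nontrivial_rel3 [c0 [c1 [c2 [e nz]]]].
have [c2z|c2n] := eqVneq c2 0; last first.
  exists (- c2^-1 * c1), (- c2^-1 * c0).
  by rewrite (solve_scale c2n e) scalerDr !scalerA addrC.
move: e; rewrite c2z scale0r addr0 => e.
have [c1z|c1n] := eqVneq c1 0; last first.
  exists (- c1^-1 * c0), 0; rewrite scale0r addr0.
  by rewrite {1}(solve_scale c1n e) (linear_funZ G_lin) (linear_funZ G_lin) scalerA.
move: e; rewrite c1z scale0r addr0 => /eqP.
have c0n : c0 != 0 by apply/eqP => c0z; apply: nz.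
rewrite scaler_eq0 (negbTE c0n) /= => /eqP ->.
by exists 0, 0; rewrite !(linear_fun0 G_lin) !scaler0 addr0.
Qed.

Lemma locally_scalar :
  (forall x, ~ free2 x (G x)) -> exists lam : C, forall x, G x = lam *: x.
Proof.
move=> dep.
have eigen x : exists mu : C, G x = mu *: x.
  have [c0 [c1 [e nz]]] := nontrivial_rel2 (dep x).
  have [c1z|c1n] := eqVneq c1 0; last first.
    by exists (- c1^-1 * c0); rewrite -scalerA; exact: solve_scale c1n e.
  move: e; rewrite c1z scale0r addr0 => /eqP.
  have c0n : c0 != 0 by apply/eqP => c0z; apply: nz.
  rewrite scaler_eq0 (negbTE c0n) /= => /eqP ->.
  by exists 0; rewrite (linear_fun0 G_lin) scale0r.
have [[x0 x0n]|X0] := pselect (exists x0 : X, x0 != 0); last first.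
  exists 0 => x; have -> : x = 0 by apply: contrapT => /eqP xn; apply: X0; exists x.
  by rewrite (linear_fun0 G_lin) scaler0.
have [lam Gx0] := eigen x0; exists lam => y.
have [free_xy|] := pselect (free2 x0 y).
  (* the eigenvalues at [x0], [y] and [x0 + y] must agree *)
  have [nu Gs] := eigen (x0 + y); have [mu Gy] := eigen y.
  rewrite (linear_funD G_lin) Gx0 Gy scalerDr in Gs.
  have : (lam - nu) *: x0 + (mu - nu) *: y = 0 by rewrite !scalerBl addrACA Gs -opprD subrr.
  move=> /free_xy [/eqP e1 /eqP e2]; move: e1 e2; rewrite !subr_eq0 => /eqP -> /eqP e2.
  by rewrite Gy e2.
move=> /nontrivial_rel2 [c0 [c1 [e nz]]].
have [c1z|c1n] := eqVneq c1 0.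
  move: e; rewrite c1z scale0r addr0 => /eqP; rewrite scaler_eq0 (negbTE x0n) orbF => /eqP.
  by move=> c0z; exfalso; apply: nz.
by rewrite (solve_scale c1n e) !(linear_funZ G_lin) Gx0 !scalerA; congr (_ *: _); ring.
Qed.

Section QuadraticAtX0.
Variables (x0 : X) (a b : C).
Hypothesis free_x0 : free2 x0 (G x0).
Hypothesis G2x0 : G (G x0) = a *: G x0 + b *: x0.

Lemma G_lcomb2 p q :
  G (lcomb2 x0 (G x0) p q) = lcomb2 x0 (G x0) (q * b) (p + q * a).
Proof.
rewrite /lcomb2 (linear_funD G_lin) !(linear_funZ G_lin) G2x0.
by rewrite scalerDr !scalerA scalerDl addrA addrC.
Qed.

Lemma quadratic_in_span y : ~ free3 x0 (G x0) y -> G (G y) = a *: G y + b *: y.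
Proof.
move=> /nontrivial_rel3 [c0 [c1 [c2 [e nz]]]].
have [c2z|c2n] := eqVneq c2 0.
  move: e; rewrite c2z scale0r addr0 => /free_x0 [c0z c1z].
  by exfalso; apply: nz.
rewrite (solve_scale c2n e) -/(lcomb2 x0 (G x0) c0 c1).
by rewrite lcomb2Z !G_lcomb2 !lcomb2Z lcomb2D; congr lcomb2; ring.
Qed.

(* If [y, G y] is independent of [x0, G x0], comparing the relation at [x0 + y]
   with those at [x0] and at [y] shows that [y] satisfies the same relation. *)
Lemma quadratic_free4 y al be :
  free4 x0 (G x0) y (G y) -> G (G y) = al *: G y + be *: y ->
  (exists al' be' : C, G (G (x0 + y)) = al' *: G (x0 + y) + be' *: (x0 + y)) ->
  G (G y) = a *: G y + b *: y.
Proof.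
move=> free4_y G2y [al' [be' Gs]].
rewrite !(linear_funD G_lin) G2x0 G2y in Gs.
have e1 : a *: G x0 + b *: x0 + (al *: G y + be *: y) = lcomb4 x0 (G x0) y (G y) b a be al.
  by rewrite /lcomb4 [a *: G x0 + _]addrC [al *: G y + _]addrC !addrA.
have e2 : al' *: (G x0 + G y) + be' *: (x0 + y) = lcomb4 x0 (G x0) y (G y) be' al' be' al'.
  by rewrite !scalerDr addrACA [al' *: G x0 + _]addrC [al' *: G y + _]addrC /lcomb4 !addrA.
rewrite e1 e2 in Gs; have [-> -> be_e al_e] := lcomb4_inj free4_y Gs.
by rewrite G2y be_e al_e.
Qed.

Hypothesis G_loc : forall w, exists al be : C, G (G w) = al *: G w + be *: w.

(* When [span (x0, G x0, y)] is [G]-invariant, the relations at the vectors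
   [x0 + t y] make a quadratic polynomial in [t] vanish at every [t != 0]. *)
Section Invariant3.
Variables (y : X) (v1 v2 mu : C).
Hypothesis free3_y : free3 x0 (G x0) y.
Hypothesis Gy : G y = lcomb3 x0 (G x0) y v1 v2 mu.

Lemma G_lcomb3 p q r : G (lcomb3 x0 (G x0) y p q r) =
  lcomb3 x0 (G x0) y (q * b + r * v1) (p + q * a + r * v2) (r * mu).
Proof.
have G2x0c : G (G x0) = lcomb3 x0 (G x0) y b a 0.
  by rewrite G2x0 /lcomb3 scale0r addr0 addrC.
have Gx0c : G x0 = lcomb3 x0 (G x0) y 0 1 0 by rewrite lcomb3_e2.
rewrite linear_fun_lcomb3 // G2x0c Gy {1}Gx0c !lcomb3Z !lcomb3D.
by congr lcomb3; ring.
Qed.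

Let r1 := v2 * b + mu * v1 - a * v1.
Let r2 := v1 + mu * v2.
Let P := mu * mu - a * mu - b.

Lemma invariant3_poly_eq0 t : t != 0 ->
  - P + (r1 + r2 * mu - P * v2) * t + (r1 * v2 - r2 * v1) * t ^+ 2 = 0.
Proof.
move=> t0; have [al [be Gt]] := G_loc (lcomb3 x0 (G x0) y 1 0 t).
rewrite !G_lcomb3 !lcomb3Z lcomb3D in Gt.
have [E1 E2 E3] := lcomb3_inj free3_y Gt.
have D3 : mu * mu - al * mu - be = 0.
  apply: (mulfI t0); rewrite mulr0 -[RHS](subrr (t * mu * mu)) [X in _ = _ - X]E3.
  by ring.
move: E1 E2 => /eqP; rewrite -subr_eq0 => /eqP E1 /eqP; rewrite -subr_eq0 => /eqP E2.
set L1 := (X in X = 0) in E1; set L2 := (X in X = 0) in E2.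
transitivity ((1 + t * v2) * L1 - (t * v1 - mu) * L2
  - (1 + t * v2) * (mu * mu - al * mu - be)); first by rewrite /L1 /L2 /r1 /r2 /P; ring.
by rewrite E1 E2 D3; ring.
Qed.

Lemma quadratic_invariant3 : G (G y) = a *: G y + b *: y.
Proof.
have [P0 k10 k20] := quadratic_eq0_on_units invariant3_poly_eq0.
have {}P0 : P = 0 by rewrite -[P]opprK P0 oppr0.
have r1E : r1 = - (r2 * mu).
  by apply/eqP; rewrite -subr_eq0 opprK -k10 P0 mul0r subr0.
have r2z : r2 = 0.
  have : r2 * r2 = 0 by rewrite -[RHS]oppr0 -k20 r1E /r2; ring.
  by move/eqP; rewrite mulf_eq0 orbb => /eqP.
have r1z : r1 = 0 by rewrite r1E r2z mul0r oppr0.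
suff : G (G y) = a *: G y + b *: lcomb3 x0 (G x0) y 0 0 1 by rewrite lcomb3_e3.
rewrite Gy G_lcomb3 !lcomb3Z lcomb3D; congr lcomb3.
all: apply/eqP; rewrite -subr_eq0; apply/eqP.
- by transitivity r1; [rewrite /r1; ring | exact: r1z].
- by transitivity r2; [rewrite /r2; ring | exact: r2z].
- by transitivity P; [rewrite /P; ring | exact: P0].
Qed.

End Invariant3.

Lemma quadratic_free3 y : free3 x0 (G x0) y -> ~ free4 x0 (G x0) y (G y) ->
  G (G y) = a *: G y + b *: y.
Proof.
move=> free3_y /nontrivial_rel4 [c0 [c1 [c2 [c3 [e nz]]]]].
have [c3z|c3n] := eqVneq c3 0.
  by move: e; rewrite c3z scale0r addr0 => /free3_y [? ? ?]; exfalso; apply: nz.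
apply: (quadratic_invariant3 (v1 := - c3^-1 * c0) (v2 := - c3^-1 * c1)
  (mu := - c3^-1 * c2) free3_y).
by rewrite (solve_scale c3n e) -/(lcomb3 x0 (G x0) y c0 c1 c2) lcomb3Z.
Qed.

Lemma quadratic_of_free2 y : G (G y) = a *: G y + b *: y.
Proof.
have [free3_y|] := pselect (free3 x0 (G x0) y); last exact: quadratic_in_span.
have [free4_y|] := pselect (free4 x0 (G x0) y (G y)); last exact: quadratic_free3.
have [al [be G2y]] := G_loc y.
exact: quadratic_free4 free4_y G2y (G_loc (x0 + y)).
Qed.

End QuadraticAtX0.

Lemma locally_quadratic : (forall w, ~ free3 w (G w) (G (G w))) ->
  exists a b : C, forall x, G (G x) = a *: G x + b *: x.
Proof.
move=> dep.
have G_loc w := quadratic_rel_of_not_free3 (dep w).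
have [[x0 free_x0]|scalar] := pselect (exists x0, free2 x0 (G x0)); last first.
  have [lam Glam] := locally_scalar (fun x hx => scalar (ex_intro _ x hx)).
  by exists lam, 0 => x; rewrite scale0r addr0 Glam.
have [a [b G2x0]] := G_loc x0.
by exists a, b; exact: quadratic_of_free2 free_x0 G2x0 G_loc.
Qed.

End LocallyQuadratic.

Section RankOne.
Variables (R : realType) (X : normedModType R[i]).
Local Notation C := R[i].

Definition contains_nonzero (K : set X) := exists x, x != 0 /\ K x.

Lemma jordan_core_free3_of_rank_ge2 (G : X -> X) (x1 x2 : X) :
  bounded_op G -> infinite_dimensional X -> free2 (G x1) (G x2) ->
  has_jordan_core contains_free3 G.
Proof.
move=> G_bd infX free_u; have G_lin := bounded_op_linear G_bd.
have [[w free_w]|cyclic] := pselect (exists w, free3 w (G w) (G (G w))).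
  exact: jordan_core_free3_cyclic G_bd free_w.
have [a [b G2]] := locally_quadratic G_lin (fun w free_w => cyclic (ex_intro _ w free_w)).
have [b0|bn] := eqVneq b 0; last exact: jordan_core_free3_quadratic G_bd infX G2 bn.
have {}G2 x : G (G x) = a *: G x by rewrite G2 b0 scale0r addr0.
have [a0|an] := eqVneq a 0.
  by apply: (jordan_core_free3_sqr0 G_bd _ free_u) => x; rewrite G2 a0 scale0r.
have [[z Gz]|scalar] := pselect (exists z, G z != a *: z).
  exact: jordan_core_free3_sqr_scale G_bd G2 an Gz free_u.
apply: (jordan_core_free3_scalar G_bd infX _ an) => x.
by apply: contrapT => /eqP Gx; apply: scalar; exists x.
Qed.

Lemma rank_one_jordan_core_nonzero (F : X -> X) :
  bounded_op F -> rank_one F -> has_jordan_core contains_nonzero F.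
Proof.
move=> F_bd [[x Fx] [y Fy]]; have F_lin := bounded_op_linear F_bd.
have [d F2x] : exists d : C, F (F x) = d *: F x.
  have [c1 e1] := Fy (F x); have [c2 e2] := Fy x.
  have c2n : c2 != 0 by apply: contra Fx; rewrite e2 => /eqP ->; rewrite scale0r.
  by exists (c1 / c2); rewrite e1 e2 scalerA mulfVK.
have [d0|dn] := eqVneq d 0.
  (* [F] is nilpotent on [F x]; take [T = g(.) x] with [g x = 1] *)
  have [g [g_bd gx]] := separating_functional Fx.
  have T_bd := bounded_op_rank1 x g_bd.
  exists (fun z => g z *: x); split => //; exists (F x); split => //.
  apply: (analytic_core_eigen _ (oner_neq0 _)).
    exact: jprod_linear (bounded_op_linear T_bd) F_lin.
  by rewrite /jprod F2x d0 scale0r (linear_fun0 g_bd.1) scale0r add0r gx !scale1r.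
exists (fun z => z); split; first exact: bounded_op_id.
exists (F x); split => //; apply: (analytic_core_eigen (lam := 2%:R * d)).
- by apply: jprod_linear F_lin; exact: (bounded_op_linear (@bounded_op_id _ X)).
- by rewrite mulf_neq0 // pnatr_eq0.
- by rewrite /jprod F2x -scalerA scaler_nat mulr2n.
Qed.

(* [TF + FT] maps into [span (y, T y)] when the range of [F] is spanned by [y]. *)
Lemma rank_one_not_jordan_core_free3 (F : X -> X) :
  rank_one F -> ~ has_jordan_core contains_free3 F.
Proof.
move=> [_ [y Fy]] [T [T_bd [w1 [w2 [w3 [k1 k2 k3]]]]]].
have T_lin := bounded_op_linear T_bd.
have in_span w : analytic_core (jprod T F) w -> exists a b : C, w = lcomb2 y (T y) a b.
  move=> /analytic_core_range [z <-]; have [c Fz] := Fy z; have [c' FTz] := Fy (T z).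
  by exists c', c; rewrite /jprod Fz (linear_funZ T_lin) FTz /lcomb2 addrC.
have [a1 [b1 ->]] := in_span _ k1; have [a2 [b2 ->]] := in_span _ k2.
have [a3 [b3 ->]] := in_span _ k3.
exact: lcomb2_not_free3.
Qed.

Lemma not_rank_one_free2 (F : X -> X) x1 : F x1 != 0 -> ~ rank_one F ->
  exists x2, free2 (F x1) (F x2).
Proof.
move=> Fx1 not_r1.
have [x2 Fx2] : exists x2, forall c : C, F x2 != c *: F x1.
  apply: contrapT => all_in; apply: not_r1; split; first by exists x1.
  exists (F x1) => x; apply: contrapT => notin; apply: all_in; exists x => c.
  by apply/eqP => e; apply: notin; exists c.
exists x2 => c0 c1 e; have [c1z|c1n] := eqVneq c1 0.
  move: e; rewrite c1z scale0r addr0 => /eqP; rewrite scaler_eq0 (negbTE Fx1) orbF.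
  by move/eqP.
by have := Fx2 (- c1^-1 * c0); rewrite (solve_scale c1n e) scalerA eqxx.
Qed.

Lemma rank_one_iff_jordan_cores (F : X -> X) : bounded_op F -> infinite_dimensional X ->
  rank_one F <->
  has_jordan_core contains_nonzero F /\ ~ has_jordan_core contains_free3 F.
Proof.
move=> F_bd infX; split.
  move=> r1; split; first exact: rank_one_jordan_core_nonzero.
  exact: rank_one_not_jordan_core_free3.
move=> [[T [T_bd [x [x0 kx]]]] not_free3]; apply: contrapT => not_r1.
have [[x1 Fx1]|F0] := pselect (exists x1, F x1 != 0); last first.
  have [z Az] := analytic_core_range kx; apply: (negP x0); apply/eqP.
  have F0z u : F u = 0 by apply: contrapT => /eqP Fu; apply: F0; exists u.
  by rewrite -Az /jprod !F0z (linear_fun0 (bounded_op_linear T_bd)) addr0.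
have [x2 free_F] := not_rank_one_free2 Fx1 not_r1.
exact/not_free3/(jordan_core_free3_of_rank_ge2 F_bd infX free_F).
Qed.

End RankOne.

Arguments contains_nonzero {R X}.

Lemma has_jordan_core_preserved (R : realType) (X : normedModType R[i])
    (phi : (X -> X) -> (X -> X)) (P : set X -> Prop) (F : X -> X) :
  (forall T : X -> X, bounded_op T -> bounded_op (phi T)) ->
  (forall S : X -> X, bounded_op S -> exists T, bounded_op T /\ phi T = S) ->
  (forall T : X -> X, bounded_op T ->
     analytic_core (jprod (phi T) (phi F)) = analytic_core (jprod T F)) ->
  has_jordan_core P (phi F) <-> has_jordan_core P F.
Proof.
move=> phi_bd phi_onto phi_core; split.
  move=> [S [S_bd PS]]; have [T [T_bd TS]] := phi_onto S S_bd.
  by exists T; split; rewrite -?phi_core ?TS.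
by move=> [T [T_bd PT]]; exists (phi T); split; rewrite ?phi_core //; exact: phi_bd.
Qed.

Theorem mainTheorem6 (R : realType) (X : completeNormedModType R[i])
  (phi : (X -> X) -> (X -> X)) :
  infinite_dimensional X ->
  (forall T : X -> X, bounded_op T -> bounded_op (phi T)) ->
  (forall S : X -> X, bounded_op S -> exists T, bounded_op T /\ phi T = S) ->
  (forall T S : X -> X, bounded_op T -> bounded_op S ->
     analytic_core (jprod (phi T) (phi S)) = analytic_core (jprod T S)) ->
  forall F : X -> X, bounded_op F -> (rank_one (phi F) <-> rank_one F).
Proof.
move=> infX phi_bd phi_onto phi_core F F_bd.
have core_F T : bounded_op T -> _ := phi_core T F ^~ F_bd.
rewrite (rank_one_iff_jordan_cores (phi_bd _ F_bd) infX).
rewrite (rank_one_iff_jordan_cores F_bd infX).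
by rewrite !(has_jordan_core_preserved _ phi_bd phi_onto core_F).
Qed.
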